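(* Let $\mathfrak R=(\mathcal B,\mathcal S,\pi)$ be a return risk measurement regime and assume that each of the sets $\mathcal C$, $\mathcal B$, $\mathcal S$ is logconvex, i.e. for $\mathcal D\in\{\mathcal C,\mathcal B,\mathcal S\}$: $X,Y\in\mathcal D$ and $\alpha\in(0,1)$ imply $X^\alpha Y^{1-\alpha}\in\mathcal D$. (i) If $\pi$ is quasi-logconvex, i.e. $\pi(X^\alpha Y^{1-\alpha})\le\max\{\pi(X),\pi(Y)\}$ for all $X,Y\in\mathcal S$, $\alpha\in(0,1)$, then $\eta_{\mathfrak R}$ is quasi-logconvex: $\eta_{\mathfrak R}(X^\alpha Y^{1-\alpha})\le\max\{\eta_{\mathfrak R}(X),\eta_{\mathfrak R}(Y)\}$ for all $X,Y\in\mathcal C$, $\alpha\in(0,1)$. (ii) If $\pi$ is logconvex, i.e. $\pi(X^\alpha Y^{1-\alpha})\le\pi(X)^\alpha\pi(Y)^{1-\alpha}$ for all $X,Y\in\mathcal S$, $\alpha\in(0,1)$, then $\eta_{\mathfrak R}$ is logconvex: $\eta_{\mathfrak R}(X^\alpha Y^{1-\alpha})\le\eta_{\mathfrak R}(X)^\alpha\eta_{\mathfrak R}(Y)^{1-\alpha}$ for all $X,Y\in\mathcal C$, $\alpha\in(0,1)$.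
   Context: Let $(\Omega,\mathcal F,P)$ be a probability space, $L^0$ the space of real random variables with the a.s. order, $L^0_{++}=\{X\in L^0:X>0\text{ a.s.}\}$, and $\frac{\mathcal A}{\mathcal D}=\{AD^{-1}:A\in\mathcal A,D\in\mathcal D\}$. Setting: nonempty sets $\mathcal C,\mathcal S,\mathcal K\subset L^0_{++}$ (model set, security set, set of relative losses) with $\frac{\mathcal C}{\mathcal S}\subset\mathcal K$; a pricing map $\pi\colon\mathcal S\to(0,\infty)$; a relative acceptance set $\mathcal B$, i.e. a nonempty proper subset of $\mathcal K$ such that $X\in\mathcal B$, $Y\in\mathcal K$, $Y\le X$ imply $Y\in\mathcal B$. $\mathfrak R=(\mathcal B,\mathcal S,\pi)$ is a return risk measurement regime, and $\eta_{\mathfrak R}(X)=\inf\{\pi(Z):Z\in\mathcal S,\ X/Z\in\mathcal B\}\in[0,\infty]$, $X\in\mathcal C$ ($\inf\emptyset=\infty$), is the MARRM. Conventions in $[0,\infty]$: $\infty^\alpha=\infty$ for $\alpha>0$, $0\cdot\infty$ is interpreted so that products involving $\infty$ with a positive factor are $\infty$. *)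

From HB Require Import structures.
From mathcomp Require Import all_boot all_order all_algebra.
From mathcomp Require Import all_classical all_reals all_analysis.
Set Implicit Arguments. Unset Strict Implicit. Unset Printing Implicit Defensive.
Import Order.TTheory GRing.Theory Num.Theory.
Local Open Scope classical_set_scope.
Local Open Scope ring_scope.

Section MARRM.
Context {R : realType} {d : measure_display} {T : measurableType d}.
Variable P : probability T R.

(* Random variables are represented by measurable functions T -> R; elements
   of L^0 are their P-a.s. equivalence classes, which we encode by requiring
   all sets/maps below to be invariant under P-a.s. equality. *)
Definition L0 : set (T -> R) := [set X | measurable_fun setT X].
Definition ae_eqRV (X Y : T -> R) : Prop := {ae P, forall w, X w = Y w}.
Definition ae_leRV (X Y : T -> R) : Prop := {ae P, forall w, X w <= Y w}.
Definition L0pp : set (T -> R) := [set X | L0 X /\ {ae P, forall w, 0 < X w}].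

Definition L0pp_class (A : set (T -> R)) : Prop :=
  A `<=` L0pp /\ (forall X Y, A X -> L0 Y -> ae_eqRV X Y -> A Y).

Definition rv_div (X Z : T -> R) : T -> R := fun w => X w / Z w.
Definition rv_gmean (a : R) (X Y : T -> R) : T -> R :=
  fun w => powR (X w) a * powR (Y w) (1 - a).

Definition logconvex (A : set (T -> R)) : Prop :=
  forall X Y a, A X -> A Y -> 0 < a < 1 -> A (rv_gmean a X Y).

Definition rrm_regime (C S K B : set (T -> R)) (pi : (T -> R) -> R) : Prop :=
  [/\ (L0pp_class C /\ C !=set0) /\ (L0pp_class S /\ S !=set0),
      L0pp_class K /\ K !=set0,
      (forall X Z, C X -> S Z -> K (rv_div X Z)),
      (forall Z, S Z -> 0 < pi Z) /\
        (forall Z Z', S Z -> S Z' -> ae_eqRV Z Z' -> pi Z = pi Z') &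
      [/\ L0pp_class B, B !=set0, B `<=` K, B <> K &
          (forall X Y, B X -> K Y -> ae_leRV Y X -> B Y)]].

Definition marrm (S B : set (T -> R)) (pi : (T -> R) -> R) (X : T -> R)
  : \bar R :=
  ereal_inf [set (pi Z)%:E | Z in [set Z | S Z /\ B (rv_div X Z)]].

End MARRM.

Definition epow {R : realType} (x : \bar R) (a : R) : \bar R :=
  if x is +oo%E then +oo%E else (powR (fine x) a)%:E.

Definition emul_oo {R : realType} (x y : \bar R) : \bar R :=
  if (x == +oo%E) || (y == +oo%E) then +oo%E else (fine x * fine y)%:E.

From HB Require Import structures.
From mathcomp Require Import all_boot all_order all_algebra.
From mathcomp Require Import all_classical all_reals all_analysis.
From mathcomp Require Import ring lra.
Set Implicit Arguments. Unset Strict Implicit. Unset Printing Implicit Defensive.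
Import Order.TTheory GRing.Theory Num.Theory.
Local Open Scope classical_set_scope.
Local Open Scope ring_scope.

(* If Z and W are admissible for X and Y, then their geometric mean is
   admissible for the geometric mean of X and Y, because the geometric mean
   commutes with taking quotients and B is logconvex and solid in K.  Hence
   eta(X^a Y^(1-a)) <= pi(Z^a W^(1-a)), and the hypothesis on pi bounds this by
   the corresponding combination of pi(Z) and pi(W); passing to the infimum
   over Z and W, which is possible because max and the geometric mean are
   monotone and continuous from above, gives both statements. *)

Section MeansOfReals.
Variable R : realType.
Implicit Types a e t x y z w : R.

Definition gmean a x y : R := powR x a * powR y (1 - a).

Lemma powRV x a : 0 < x -> powR x^-1 a = (powR x a)^-1.
Proof. by move=> x0; rewrite -powR_inv1 ?ltW // -powRrM mulN1r powRN. Qed.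

Lemma gmeanC a x y : gmean a x y = gmean (1 - a) y x.
Proof. by rewrite /gmean subKr mulrC. Qed.

Lemma gmean_div a x y z w : 0 < x -> 0 < y -> 0 < z -> 0 < w ->
  gmean a x y / gmean a z w = gmean a (x / z) (y / w).
Proof.
by move=> x0 y0 z0 w0; rewrite /gmean !powRM ?invr_ge0 ?ltW // !powRV // invfM; ring.
Qed.

Lemma gmeanZ a t x y : 0 <= t -> 0 <= x -> 0 <= y ->
  gmean a (t * x) (t * y) = t * gmean a x y.
Proof.
move=> t0 x0 y0; rewrite /gmean !powRM // mulrACA -powRD; last by rewrite subrKC oner_eq0.
by rewrite subrKC powRr1.
Qed.

Lemma gmean0l a y : 0 < a -> gmean a 0 y = 0.
Proof. by move=> a0; rewrite /gmean powR0 ?gt_eqF ?mul0r. Qed.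

Lemma gmean_gt0 a x y : 0 < x -> 0 < y -> 0 < gmean a x y.
Proof. by move=> x0 y0; rewrite mulr_gt0 ?powR_gt0. Qed.

Lemma ler_gmean a x x' y y' : 0 <= a <= 1 -> 0 <= x -> x <= x' -> 0 <= y -> y <= y' ->
  gmean a x y <= gmean a x' y'.
Proof.
move=> /andP[a0 a1] x0 xx' y0 yy'.
by rewrite ler_pM ?powR_ge0 ?ge0_ler_powR ?nnegrE ?subr_ge0 //; lra.
Qed.

Lemma gmean_surjl a y e : 0 < a -> 0 < y -> 0 < e -> exists2 x, 0 < x & gmean a x y = e.
Proof.
move=> a0 y0 e0; have c0 : 0 < e / powR y (1 - a) by rewrite divr_gt0 ?powR_gt0.
exists (powR (e / powR y (1 - a)) a^-1); first exact: powR_gt0.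
by rewrite /gmean -powRrM mulVf ?gt_eqF // powRr1 ?divfK ?gt_eqF ?powR_gt0 ?ltW.
Qed.

(* Continuity from above, in the form needed to pass to an infimum: positive
   arguments are scaled by 1 + e / gmean a x y; when one argument is 0 the
   other one is raised by 1 and the first chosen so that the mean is e. *)
Lemma gmean_approx a x y e : 0 < a < 1 -> 0 <= x -> 0 <= y -> 0 < e ->
  exists x' y', [/\ x < x', y < y' & gmean a x' y' <= gmean a x y + e].
Proof.
move=> /andP[a0 a1] x0 y0 e0.
have [->|xn0] := eqVneq x 0.
  have [x' x'_gt0 <-] := gmean_surjl a0 (ltr_wpDl y0 ltr01) e0.
  by exists x', (y + 1); rewrite gmean0l // add0r ltrDl.
have [->|yn0] := eqVneq y 0.
  have a'_gt0 : 0 < 1 - a by rewrite subr_gt0.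
  have [y' y'_gt0 Ge] := gmean_surjl a'_gt0 (ltr_wpDl x0 ltr01) e0.
  by exists (x + 1), y'; rewrite (gmeanC a x) gmean0l // add0r ltrDl gmeanC Ge.
have x_gt0 : 0 < x by rewrite lt_neqAle eq_sym xn0.
have y_gt0 : 0 < y by rewrite lt_neqAle eq_sym yn0.
have G_gt0 := gmean_gt0 a x_gt0 y_gt0.
have t_gt1 : 1 < 1 + e / gmean a x y by rewrite ltrDl divr_gt0.
exists ((1 + e / gmean a x y) * x), ((1 + e / gmean a x y) * y).
rewrite !ltr_pMl // gmeanZ ?(ltW (lt_trans ltr01 t_gt1)) //.
by rewrite mulrDl mul1r (divfK (lt0r_neq0 G_gt0)).
Qed.

Lemma maxr_approx x y e : 0 < e ->
  exists x' y', [/\ x < x', y < y' & Num.max x' y' <= Num.max x y + e].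
Proof.
move=> e0; exists (x + e), (y + e); rewrite !ltrDl e0; split => //.
by rewrite ge_max !lerD2r le_max lexx le_max lexx orbT.
Qed.

End MeansOfReals.

Section InfimumOfImage.
Variables (R : realType) (A : Type) (f : A -> R).
Implicit Types (F : set A) (x y : R) (m : \bar R).

Definition einf_img F : \bar R := ereal_inf [set (f z)%:E | z in F].

Lemma einf_img_lt F x : (einf_img F < x%:E)%E -> exists2 z, F z & f z < x.
Proof. by move/ereal_inf_lt => [_ [z Fz <-]]; rewrite lte_fin => h; exists z. Qed.

Lemma einf_img_fin F : (forall z, F z -> 0 <= f z) -> einf_img F != +oo%E ->
  exists2 x, einf_img F = x%:E & 0 <= x.
Proof.
move=> f_ge0; have : (0 <= einf_img F)%E.
  by apply: le_ereal_inf_tmp => _ [z Fz <-]; rewrite lee_fin f_ge0.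
case: (einf_img F) => [x + _| _ /eqP[] // | //].
by rewrite lee_fin => x0; exists x.
Qed.

Lemma le_einf_img2 (h : R -> R -> R) F1 F2 m x y :
  (forall x x' y y', 0 <= x -> x <= x' -> 0 <= y -> y <= y' -> h x y <= h x' y') ->
  (forall x y e, 0 <= x -> 0 <= y -> 0 < e ->
     exists x' y', [/\ x < x', y < y' & h x' y' <= h x y + e]) ->
  (forall z, F1 z -> 0 <= f z) -> (forall w, F2 w -> 0 <= f w) ->
  (forall z w, F1 z -> F2 w -> (m <= (h (f z) (f w))%:E)%E) ->
  einf_img F1 = x%:E -> 0 <= x -> einf_img F2 = y%:E -> 0 <= y ->
  (m <= (h x y)%:E)%E.
Proof.
move=> h_mono h_approx f1_ge0 f2_ge0 hm F1x x0 F2y y0.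
apply/lee_addgt0Pr => e e0.
have [x' [y' [xx' yy' hxy']]] := h_approx x y e x0 y0 e0.
have [z F1z fzx'] : exists2 z, F1 z & f z < x' by apply: einf_img_lt; rewrite F1x lte_fin.
have [w F2w fwy'] : exists2 w, F2 w & f w < y' by apply: einf_img_lt; rewrite F2y lte_fin.
apply: (le_trans (hm z w F1z F2w)); rewrite -EFinD lee_fin (le_trans _ hxy') //.
by apply: h_mono; [exact: f1_ge0 | exact: ltW | exact: f2_ge0 | exact: ltW].
Qed.

Lemma le_maxe_einf_img F1 F2 m :
  (forall z, F1 z -> 0 <= f z) -> (forall w, F2 w -> 0 <= f w) ->
  (forall z w, F1 z -> F2 w -> (m <= maxe (f z)%:E (f w)%:E)%E) ->
  (m <= maxe (einf_img F1) (einf_img F2))%E.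
Proof.
move=> f1_ge0 f2_ge0 hm.
have [->|/(einf_img_fin f1_ge0)[x F1x x0]] := eqVneq (einf_img F1) +oo%E.
  by rewrite maxye leey.
have [->|/(einf_img_fin f2_ge0)[y F2y y0]] := eqVneq (einf_img F2) +oo%E.
  by rewrite maxey leey.
rewrite F1x F2y -EFin_max.
apply: (le_einf_img2 (h := Num.max) _ _ f1_ge0 f2_ge0 _ F1x x0 F2y y0).
- by move=> ? ? ? ? _ ? _ ?; exact: le_max2.
- by move=> ? ? ? _ _; exact: maxr_approx.
- by move=> z w F1z F2w; rewrite EFin_max hm.
Qed.

Lemma le_emul_epow_einf_img F1 F2 m a : 0 < a < 1 ->
  (forall z, F1 z -> 0 <= f z) -> (forall w, F2 w -> 0 <= f w) ->
  (forall z w, F1 z -> F2 w -> (m <= (gmean a (f z) (f w))%:E)%E) ->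
  (m <= emul_oo (epow (einf_img F1) a) (epow (einf_img F2) (1 - a)))%E.
Proof.
move=> a01 f1_ge0 f2_ge0 hm.
have [->|/(einf_img_fin f1_ge0)[x F1x x0]] := eqVneq (einf_img F1) +oo%E.
  by rewrite /emul_oo /= leey.
have [->|/(einf_img_fin f2_ge0)[y F2y y0]] := eqVneq (einf_img F2) +oo%E.
  by rewrite /emul_oo /= orbT leey.
rewrite F1x F2y /emul_oo /=.
apply: (le_einf_img2 (h := gmean a) _ _ f1_ge0 f2_ge0 hm F1x x0 F2y y0).
- by move=> *; apply: ler_gmean => //; move: a01 => /andP[? ?]; lra.
- by move=> *; exact: gmean_approx.
Qed.

End InfimumOfImage.

Section ReturnRiskMeasure.
Variables (R : realType) (d : measure_display) (T : measurableType d).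
Variables (P : probability T R) (C S K B : set (T -> R)) (pi : (T -> R) -> R).
Hypothesis regime : rrm_regime P C S K B pi.
Hypotheses (logconvexC : logconvex C) (logconvexB : logconvex B).
Hypothesis logconvexS : logconvex S.

Definition admissible (X : T -> R) : set (T -> R) := [set Z | S Z /\ B (rv_div X Z)].

Lemma pi_admissible_ge0 X Z : admissible X Z -> 0 <= pi Z.
Proof. by case: regime => _ _ _ [pi_gt0 _] _ [/pi_gt0/ltW]. Qed.

Lemma admissible_gmean X Y Z W a : 0 < a < 1 -> C X -> C Y ->
  admissible X Z -> admissible Y W -> admissible (rv_gmean a X Y) (rv_gmean a Z W).
Proof.
move=> a01 CX CY [SZ BXZ] [SW BYW].
have [[[Cpp _] [Spp _]] [Kpp _] CSK _ [Bpp _ _ _ _]] := regime.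
split; first exact: logconvexS.
apply: (Bpp.2 (rv_gmean a (rv_div X Z) (rv_div Y W))); first exact: logconvexB.
  exact: (Kpp.1 _ (CSK _ _ (logconvexC CX CY a01) (logconvexS SZ SW a01))).1.
have X_gt0 := (Cpp.1 _ CX).2; have Y_gt0 := (Cpp.1 _ CY).2.
have Z_gt0 := (Spp.1 _ SZ).2; have W_gt0 := (Spp.1 _ SW).2.
near=> w.
have [Xw_gt0 Yw_gt0 Zw_gt0 Ww_gt0] : [/\ 0 < X w, 0 < Y w, 0 < Z w & 0 < W w].
  by split; near: w.
exact/esym/(gmean_div a Xw_gt0 Yw_gt0 Zw_gt0 Ww_gt0).
Unshelve. all: by end_near.
Qed.

Lemma marrm_gmean_le X Y Z W a : 0 < a < 1 -> C X -> C Y ->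
  admissible X Z -> admissible Y W ->
  (marrm S B pi (rv_gmean a X Y) <= (pi (rv_gmean a Z W))%:E)%E.
Proof.
by move=> a01 CX CY XZ YW; apply: ereal_inf_lbound; exists (rv_gmean a Z W);
  first exact: admissible_gmean.
Qed.

End ReturnRiskMeasure.

Theorem mainTheorem5 (R : realType) (d : measure_display) (T : measurableType d)
  (P : probability T R) (C S K B : set (T -> R)) (pi : (T -> R) -> R) :
  rrm_regime P C S K B pi ->
  logconvex C -> logconvex B -> logconvex S ->
  ((forall X Y a, S X -> S Y -> 0 < a < 1 ->
      pi (rv_gmean a X Y) <= Num.max (pi X) (pi Y)) ->
   forall X Y a, C X -> C Y -> 0 < a < 1 ->
      (marrm S B pi (rv_gmean a X Y) <= maxe (marrm S B pi X) (marrm S B pi Y))%E)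
  /\
  ((forall X Y a, S X -> S Y -> 0 < a < 1 ->
      pi (rv_gmean a X Y) <= powR (pi X) a * powR (pi Y) (1 - a)) ->
   forall X Y a, C X -> C Y -> 0 < a < 1 ->
      (marrm S B pi (rv_gmean a X Y)
        <= emul_oo (epow (marrm S B pi X) a) (epow (marrm S B pi Y) (1 - a)))%E).
Proof.
move=> regime logconvexC logconvexB logconvexS.
have pi_ge0 := pi_admissible_ge0 regime.
have eta_le_pi := marrm_gmean_le regime logconvexC logconvexB logconvexS.
split=> pi_mean X Y a CX CY a01.
- apply: le_maxe_einf_img (pi_ge0 X) (pi_ge0 Y) _ => Z W XZ YW.
  rewrite (le_trans (eta_le_pi _ _ _ _ _ a01 CX CY XZ YW)) //.
  by rewrite -EFin_max lee_fin pi_mean //; [case: XZ | case: YW].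
- apply: le_emul_epow_einf_img (pi_ge0 X) (pi_ge0 Y) _ => // Z W XZ YW.
  rewrite (le_trans (eta_le_pi _ _ _ _ _ a01 CX CY XZ YW)) //.
  by rewrite lee_fin pi_mean //; [case: XZ | case: YW].
Qed.
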